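(* Let $r$ be a positive integer and $n\ge0$. Then $$E_n^{(r)}(x)=\frac{2^{r-1}}{(r-1)!}\sum_{\substack{0\le j\le r-1\\ 0\le k\le n/2}}(-1)^j\,s(r,r-j)\binom{n}{2k}r^{n-2k}\,E_{2k+r-j-1}\,E_{n-2k}\!\left(\frac{x}{r}\right).$$
   Context: For a positive integer $r$, the Euler polynomials of order $r$ are defined by $\sum_{n\ge0}E_n^{(r)}(x)\frac{t^n}{n!}=\left(\frac{2}{e^t+1}\right)^re^{xt}$. $E_n(x)=E_n^{(1)}(x)$ are the Euler polynomials and $E_m:=E_m(0)$. $s(n,l)$ denotes the (signed) Stirling numbers of the first kind, $x(x-1)\cdots(x-n+1)=\sum_l s(n,l)x^l$. *)

From mathcomp Require Import all_boot all_order all_algebra.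
Set Implicit Arguments. Unset Strict Implicit. Unset Printing Implicit Defensive.
Import Order.TTheory GRing.Theory Num.Theory.
Local Open Scope ring_scope.

(* Exponential generating functions are represented by their coefficient
   sequences a : nat -> R, with A(t) = \sum_n a n t^n / n!.
   The product of EGFs is the binomial convolution. *)
Definition egf_mul {R : numFieldType} (a b : nat -> R) : nat -> R :=
  fun n => \sum_(k < n.+1) 'C(n, k)%:R * a k * b (n - k)%N.

Definition egf_one {R : numFieldType} : nat -> R := fun n => (n == 0%N)%:R.

Fixpoint egf_pow {R : numFieldType} (a : nat -> R) (r : nat) : nat -> R :=
  match r with
  | 0%N => egf_one
  | r'.+1 => egf_mul a (egf_pow a r')
  end.

Definition egf_exp {R : numFieldType} (x : R) : nat -> R := fun n => x ^+ n.

(* Coefficients g_0, ..., g_n of the EGF 2/(e^t+1), i.e. of the formal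
   inverse of (e^t+1)/2: they are uniquely determined by
   (e^t + 1) * G(t) = 2, i.e. g_n + \sum_(k<=n) C(n,k) g_k = 2 [n = 0]. *)
Fixpoint euler_seq {R : numFieldType} (n : nat) : seq R :=
  match n with
  | 0%N => [:: 1]
  | n'.+1 => let s := euler_seq n' in
             rcons s (- (\sum_(k < n'.+1) 'C(n'.+1, k)%:R * s`_k) / 2)
  end.

(* E_m := E_m(0), the m-th coefficient of 2/(e^t+1) *)
Definition eulerE {R : numFieldType} (m : nat) : R := (euler_seq m)`_m.

(* Euler polynomials of order r:
   \sum_n E_n^{(r)}(x) t^n/n! = (2/(e^t+1))^r e^{xt} *)
Definition eulerPolyR {R : numFieldType} (r n : nat) (x : R) : R :=
  egf_mul (egf_pow eulerE r) (egf_exp x) n.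

Definition eulerPoly {R : numFieldType} (n : nat) (x : R) : R := eulerPolyR 1 n x.

Definition stirling1 (n l : nat) : int :=
  (\prod_(i < n) ('X - (i%:R)%:P) : {poly int})`_l.

(* In the ring of exponential generating functions (coefficient sequences under
   binomial convolution) let f = 2/(e^t+1), so that E_n^(r)(x) is the n-th
   coefficient of f^r e^(xt).  Since f(t) e^t = 2 - f(t) = f(-t), we get
   f(t)^r (1 + e^(rt)) = f(t)^r + f(-t)^r, i.e. f^r = f(rt) Ev(f^r) where Ev
   takes the even part.  Differentiating f (1 + e^t) = 2 gives the Riccati
   equation 2f' = f^2 - 2f, hence by induction
   2^m (D+1)(D+2)...(D+m) f = m! f^(m+1) with D = d/dt; the coefficients of
   (X+1)...(X+r-1) are the signed Stirling numbers (-1)^j s(r,r-j), which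
   expresses each coefficient of f^r through the E_m.  Finally f(rt) e^(xt)
   generates r^n E_n(x/r), and expanding Ev(f^r) * f(rt) e^(xt) gives the
   formula. *)

From HB Require Import structures.
From mathcomp Require Import all_boot all_order all_algebra.
From mathcomp Require Import boolp ring zify.
Set Implicit Arguments. Unset Strict Implicit. Unset Printing Implicit Defensive.
Import Order.TTheory GRing.Theory Num.Theory.
Local Open Scope ring_scope.

Section EgfTruncation.
Variable R : numFieldType.
Implicit Types a b c : nat -> R.

Lemma natr_fact_neq0 n : (n`!%:R : R) != 0.
Proof. by rewrite pnatr_eq0 -lt0n fact_gt0. Qed.

(* Dividing the n-th coefficient by n! turns the binomial convolution into the
   Cauchy product, so the ring laws of [egf_mul] are read off products of
   truncated polynomials. *)
Definition egf_coef a i : R := a i / i`!%:R.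

Definition egf_trunc N a : {poly R} := \poly_(i < N) egf_coef a i.

Lemma egf_coef_inj a b : egf_coef a =1 egf_coef b -> a = b.
Proof.
move=> eq_ab; apply: funext => n; have := eq_ab n.
exact/mulIf/invr_neq0/natr_fact_neq0.
Qed.

Lemma coef_egf_trunc N a i : (i < N)%N -> (egf_trunc N a)`_i = egf_coef a i.
Proof. by move=> lt_iN; rewrite coef_poly lt_iN. Qed.

Lemma egf_coef_mul N a b n : (n < N)%N ->
  egf_coef (egf_mul a b) n = (egf_trunc N a * egf_trunc N b)`_n.
Proof.
move=> lt_nN; rewrite coefM /egf_coef /egf_mul mulr_suml; apply: eq_bigr => i _.
have le_in : (i <= n)%N by rewrite -ltnS.
rewrite !coef_egf_trunc ?(leq_ltn_trans (leq_subr i n)) ?(leq_ltn_trans le_in) //.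
rewrite /egf_coef -(bin_fact le_in) !natrM.
have binC_neq0 : ('C(n, i)%:R : R) != 0 by rewrite pnatr_eq0 -lt0n bin_gt0.
by field; rewrite binC_neq0 !natr_fact_neq0.
Qed.

Lemma coefM_eq_upto (p q p' q' : {poly R}) n :
    (forall i, (i <= n)%N -> p`_i = p'`_i) ->
    (forall i, (i <= n)%N -> q`_i = q'`_i) ->
  (p * q)`_n = (p' * q')`_n.
Proof.
move=> eq_p eq_q; rewrite !coefM; apply: eq_bigr => i _.
by rewrite eq_p ?eq_q ?leq_subr // -ltnS.
Qed.

Lemma egf_mulA : associative (@egf_mul R).
Proof.
move=> a b c; apply: egf_coef_inj => n; rewrite !(egf_coef_mul _ _ (ltnSn n)).
have trunc_mul i a' b' : (i <= n)%N ->
    (egf_trunc n.+1 (egf_mul a' b'))`_i = (egf_trunc n.+1 a' * egf_trunc n.+1 b')`_i.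
  by move=> le_in; rewrite coef_egf_trunc // (@egf_coef_mul n.+1 _ _ i le_in).
transitivity ((egf_trunc n.+1 a * (egf_trunc n.+1 b * egf_trunc n.+1 c))`_n).
  by apply: coefM_eq_upto => i le_in //; exact: trunc_mul.
by rewrite mulrA; apply: coefM_eq_upto => i le_in //; rewrite trunc_mul.
Qed.

Lemma egf_mulC : commutative (@egf_mul R).
Proof.
by move=> a b; apply: egf_coef_inj => n; rewrite !(egf_coef_mul _ _ (ltnSn n)) mulrC.
Qed.

Lemma egf_mul1 : left_id egf_one (@egf_mul R).
Proof.
move=> a; apply: egf_coef_inj => n; rewrite (egf_coef_mul _ _ (ltnSn n)).
have -> : egf_trunc n.+1 egf_one = 1.
  apply/polyP => -[|i]; rewrite coef_poly coef1 /egf_coef /egf_one /=.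
    by rewrite fact0 divr1.
  by rewrite mul0r if_same.
by rewrite mul1r coef_egf_trunc.
Qed.

Lemma egf_mulDl a b c :
  egf_mul (fun n => a n + b n) c = (fun n => egf_mul a c n + egf_mul b c n).
Proof.
apply: funext => n; rewrite /egf_mul -big_split; apply: eq_bigr => i _.
by rewrite mulrDr mulrDl.
Qed.

End EgfTruncation.

Definition egf (R : numFieldType) := nat -> R.

HB.instance Definition _ (R : numFieldType) := Choice.copy (egf R) (nat -> R).

Section EgfRing.
Variable R : numFieldType.
Implicit Types a b c : egf R.

Let egf_add a b : egf R := fun n => a n + b n.

Let egf_addA : associative egf_add.
Proof. by move=> a b c; apply: funext => n; apply: addrA. Qed.

Let egf_addC : commutative egf_add.
Proof. by move=> a b; apply: funext => n; apply: addrC. Qed.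

Let egf_add0 : left_id (fun _ => 0) egf_add.
Proof. by move=> a; apply: funext => n; apply: add0r. Qed.

Let egf_addN : left_inverse (fun _ => 0) (fun a n => - a n) egf_add.
Proof. by move=> a; apply: funext => n; apply: addNr. Qed.

HB.instance Definition _ := GRing.isZmodule.Build (egf R)
  egf_addA egf_addC egf_add0 egf_addN.

Let egf_one_neq0 : (egf_one : egf R) != 0.
Proof. by apply/eqP => /(congr1 (fun a : egf R => a 0%N))/eqP; rewrite oner_eq0. Qed.

HB.instance Definition _ := GRing.Zmodule_isComNzRing.Build (egf R)
  (@egf_mulA R) (@egf_mulC R) (@egf_mul1 R) (@egf_mulDl R) egf_one_neq0.

Lemma egfD a b n : (a + b) n = a n + b n. Proof. by []. Qed.
Lemma egfM a b : a * b = egf_mul a b. Proof. by []. Qed.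
Lemma egf1 n : (1 : egf R) n = (n == 0)%:R. Proof. by []. Qed.

Lemma egf_natr k n : (k%:R : egf R) n = k%:R * (n == 0)%:R.
Proof. by elim: k => [|k IHk]; rewrite ?mul0r // -addn1 !natrD egfD IHk mulrDl mul1r. Qed.

Lemma egf_natrM k a n : (k%:R * a) n = k%:R * a n.
Proof.
rewrite egfM /egf_mul big_ord_recl big1 => [|i _]; last first.
  by rewrite egf_natr /= !mulr0 mul0r.
by rewrite addr0 bin0 mul1r egf_natr mulr1 subn0.
Qed.

Lemma egf_natr_lreg k : (0 < k)%N -> GRing.lreg (k%:R : egf R).
Proof.
move=> k_gt0 a b /(congr1 (fun c : egf R => c _)) eq_ab; apply: funext => n.
by move: (eq_ab n); rewrite !egf_natrM; apply/mulfI; rewrite pnatr_eq0 -lt0n.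
Qed.

Lemma egf_powE a r : egf_pow a r = a ^+ r.
Proof. by elim: r => [|r IHr] //=; rewrite exprS IHr. Qed.

End EgfRing.

Section EgfDerivative.
Variable R : numFieldType.
Implicit Types a b : egf R.

Definition egf_deriv a : egf R := fun n => a n.+1.

HB.instance Definition _ :=
  GRing.isZmodMorphism.Build (egf R) (egf R) egf_deriv (fun a b => erefl).

Lemma egf_coef_deriv N a i : (i.+1 < N)%N ->
  egf_coef (egf_deriv a) i = ((egf_trunc N a)^`())`_i.
Proof.
move=> lt_iN; rewrite coef_deriv coef_egf_trunc // -mulr_natr /egf_coef /egf_deriv.
by rewrite factS natrM; field; rewrite natr_fact_neq0 addrC natr1 pnatr_eq0.
Qed.

Lemma egf_coefD a b n : egf_coef (a + b) n = egf_coef a n + egf_coef b n.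
Proof. exact: mulrDl. Qed.

Lemma egf_derivM a b : egf_deriv (a * b) = egf_deriv a * b + a * egf_deriv b.
Proof.
apply: egf_coef_inj => n; set N := n.+2.
rewrite (egf_coef_deriv _ (ltnSn _)) egf_coefD !egfM.
rewrite !(egf_coef_mul _ _ (ltnW (ltnSn N.-1))) coef_deriv.
rewrite coef_egf_trunc // (egf_coef_mul _ _ (ltnSn N.-1)) -coef_deriv derivM coefD.
by congr (_ + _); apply: coefM_eq_upto => i le_in //;
  rewrite coef_egf_trunc ?ltnS ?(leqW le_in) // (@egf_coef_deriv N).
Qed.

Lemma egf_deriv_natr k : egf_deriv (k%:R : egf R) = 0.
Proof. by apply: funext => n; rewrite /egf_deriv egf_natr mulr0. Qed.

Lemma egf_deriv_natrM k a : egf_deriv (k%:R * a) = k%:R * egf_deriv a.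
Proof. by rewrite egf_derivM egf_deriv_natr mul0r add0r. Qed.

Lemma egf_deriv_exp1 : egf_deriv (egf_exp 1 : egf R) = egf_exp 1.
Proof. by apply: funext => n; rewrite /egf_deriv /egf_exp !expr1n. Qed.

End EgfDerivative.

Arguments egf_deriv {R}.

Section EgfScale.
Variable R : numFieldType.
Implicit Types (x y : R) (a b : egf R).

(* A(t) |-> A(x t) *)
Definition egf_scale x a : egf R := fun n => x ^+ n * a n.

Lemma egf_scale_is_zmod_morphism x : zmod_morphism (egf_scale x).
Proof. by move=> a b; apply: funext => n; apply: mulrBr. Qed.

Lemma egf_scale_is_monoid_morphism x : monoid_morphism (egf_scale x).
Proof.
split=> [|a b]; apply: funext => n.
  by rewrite /egf_scale egf1; case: n => [|n]; rewrite ?expr0 ?mul1r ?mulr0.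
rewrite /egf_scale !egfM /egf_mul mulr_sumr; apply: eq_bigr => i _.
have le_in : (i <= n)%N by rewrite -ltnS.
rewrite -{1}(subnKC le_in) exprD.
by move: (x ^+ i) (x ^+ (n - i)) ('C(n, i)%:R) (a i) (b (n - i)%N) => u v w p q; ring.
Qed.

HB.instance Definition _ x :=
  GRing.isZmodMorphism.Build (egf R) (egf R) (egf_scale x) (egf_scale_is_zmod_morphism x).
HB.instance Definition _ x :=
  GRing.isMonoidMorphism.Build (egf R) (egf R) (egf_scale x)
    (egf_scale_is_monoid_morphism x).

Lemma egf_expD x y : (egf_exp x : egf R) * egf_exp y = egf_exp (x + y).
Proof.
apply: funext => n; rewrite egfM /egf_mul /egf_exp addrC exprDn.
by apply: eq_bigr => i _; rewrite mulr_natl mulrnAl mulrC.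
Qed.

Lemma egf_exp0 : (egf_exp 0 : egf R) = 1.
Proof. by apply: funext => n; rewrite /egf_exp expr0n egf1. Qed.

Lemma egf_expMn x m : (egf_exp x : egf R) ^+ m = egf_exp (x *+ m).
Proof.
elim: m => [|m IHm]; first by rewrite expr0 mulr0n egf_exp0.
by rewrite exprS IHm egf_expD mulrS.
Qed.

Lemma egf_scale_exp x y : egf_scale x (egf_exp y) = egf_exp (x * y).
Proof. by apply: funext => n; rewrite /egf_scale /egf_exp exprMn. Qed.

Definition egf_even a : egf R := fun n => if odd n then 0 else a n.

Lemma egf_even_mul2 a : 2 * egf_even a = a + egf_scale (-1) a.
Proof.
apply: funext => n; rewrite egf_natrM egfD /egf_scale /egf_even -signr_odd.
by case: (odd n); rewrite ?mulr0 ?mulN1r ?subrr // expr0 mul1r mulr_natl mulr2n.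
Qed.

End EgfScale.

Section StirlingPolynomials.
Variable R : comNzRingType.

Definition rising_poly r : {poly R} := \prod_(i < r) ('X + i%:R%:P).
Definition falling_poly r : {poly R} := \prod_(i < r) ('X - i%:R%:P).
Definition shifted_rising_poly m : {poly R} := \prod_(i < m) ('X + i.+1%:R%:P).

Lemma stirling1E r l : (stirling1 r l)%:~R = (falling_poly r)`_l.
Proof.
rewrite /stirling1 -(coef_map (intr : {rmorphism int -> R})) map_prod_XsubC.
by under eq_bigr do rewrite rmorph_nat.
Qed.

Lemma coef_rising_poly r l : (rising_poly r)`_l = (-1) ^+ (r + l) * (falling_poly r)`_l.
Proof.
elim: r l => [|r IHr] l.
  rewrite /rising_poly /falling_poly !big_ord0 coef1.
  by case: l => [|l] /=; rewrite ?expr0 ?mul1r ?mulr0.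
rewrite /rising_poly /falling_poly !big_ord_recr /= -/(rising_poly r) -/(falling_poly r).
rewrite mulrDr mulrBr coefD coefB !coefMX !coefMC.
case: l => [|l] /=; first by rewrite IHr !addn0 exprS; ring.
by rewrite !IHr !addnS !addSn !exprS; ring.
Qed.

Lemma size_shifted_rising_poly m : (size (shifted_rising_poly m) <= m.+1)%N.
Proof.
elim: m => [|m IHm]; first by rewrite /shifted_rising_poly big_ord0 size_poly1.
rewrite /shifted_rising_poly big_ord_recr /= (leq_trans (size_polyMleq _ _)) //.
by rewrite size_XaddC addn2.
Qed.

Lemma coef_shifted_rising_poly m i :
  (shifted_rising_poly m)`_i = (rising_poly m.+1)`_i.+1.
Proof.
rewrite /rising_poly big_ord_recl /= addr0 coefXM /=.
by congr (_`_i); apply: eq_bigr => j _; rewrite /bump /= add1n.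
Qed.

Lemma coef_shifted_rising_poly_stirling1 r j : (j < r)%N ->
  (shifted_rising_poly r.-1)`_(r.-1 - j) = (-1) ^+ j * (stirling1 r (r - j))%:~R.
Proof.
case: r => [//|r] /=; rewrite ltnS => le_jr.
rewrite coef_shifted_rising_poly coef_rising_poly stirling1E subSn //.
have -> : (r.+1 + (r - j).+1 = j + 2 * (r - j).+1)%N by lia.
by rewrite exprD exprM sqrrN expr1n expr1n mulr1.
Qed.

End StirlingPolynomials.

Section EulerEgf.
Variable R : numFieldType.

Lemma size_euler_seq m : size (euler_seq m : seq R) = m.+1.
Proof. by elim: m => [|m IHm] //=; rewrite size_rcons IHm. Qed.

Lemma nth_euler_seq m k : (k <= m)%N -> (euler_seq m : seq R)`_k = eulerE k.
Proof.
elim: m => [|m IHm]; first by rewrite leqn0 => /eqP->.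
rewrite leq_eqVlt => /orP[/eqP-> //|]; rewrite ltnS => le_km.
by rewrite /= nth_rcons size_euler_seq ltnS le_km IHm.
Qed.

Lemma eulerES n :
  eulerE n.+1 = - (\sum_(k < n.+1) 'C(n.+1, k)%:R * eulerE k) / (2 : R).
Proof.
rewrite {1}/eulerE /= nth_rcons size_euler_seq ltnn eqxx; congr (- _ / _).
by apply: eq_bigr => k _; rewrite nth_euler_seq // -ltnS.
Qed.

Definition euler_egf : egf R := eulerE.

Local Notation f := euler_egf.
Local Notation e := (egf_exp 1 : egf R).

Lemma euler_egf_mul_1_add_exp : f * (1 + e) = 2.
Proof.
apply: funext => n; rewrite mulrDr mulr1 egfD egf_natr egfM /egf_mul /euler_egf.
under eq_bigr do rewrite /egf_exp expr1n mulr1.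
case: n => [|n]; first by rewrite big_ord1 /= bin0 !mulr1 mulr1n mulr2n.
rewrite big_ord_recr /= binn mul1r mulr0 eulerES.
by field.
Qed.

Lemma euler_egf_mul_exp1 : f * e = 2 - f.
Proof. by rewrite -euler_egf_mul_1_add_exp; ring. Qed.

Lemma euler_egf_scale_mul x : egf_scale x f * (1 + (egf_exp x : egf R)) = 2.
Proof.
have := congr1 (egf_scale x) euler_egf_mul_1_add_exp.
by rewrite rmorphM rmorphD rmorph1 rmorph_nat /= egf_scale_exp mulr1.
Qed.

Lemma egf_scaleN1_euler : egf_scale (-1) f = 2 - f.
Proof.
set g := egf_scale (-1) f; set h := 2 - f; set u := 1 + (egf_exp (-1) : egf R).
have gu : g * u = 2 := euler_egf_scale_mul (-1).
have hu : h * u = 2.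
  rewrite /h -euler_egf_mul_exp1 -mulrA mulrDr mulr1 egf_expD subrr egf_exp0.
  by rewrite addrC euler_egf_mul_1_add_exp.
apply: (@egf_natr_lreg _ 2) => //.
by rewrite -{1}hu -gu; ring.
Qed.

Lemma euler_egf_pow_even r : f ^+ r = egf_scale r%:R f * egf_even (f ^+ r).
Proof.
apply: (@egf_natr_lreg _ 2) => //.
rewrite mulrCA egf_even_mul2 rmorphXn /= egf_scaleN1_euler -euler_egf_mul_exp1.
by rewrite exprMn egf_expMn -{1}(euler_egf_scale_mul r%:R); ring.
Qed.

Lemma euler_egf_riccati : 2 * egf_deriv f = f * f - 2 * f.
Proof.
have dfe : egf_deriv f * (1 + e) + f * e = 0.
  have := congr1 egf_deriv euler_egf_mul_1_add_exp.
  by rewrite egf_derivM raddfD /= !egf_deriv_natr egf_deriv_exp1 add0r.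
transitivity (f * (egf_deriv f * (1 + e))).
  by rewrite -{1}euler_egf_mul_1_add_exp; ring.
have -> : egf_deriv f * (1 + e) = - (f * e) by apply/eqP; rewrite -addr_eq0 dfe.
by rewrite euler_egf_mul_exp1; ring.
Qed.

Lemma euler_egf_pow_deriv m :
  2 * egf_deriv (f ^+ m) = m%:R * (f ^+ m.+1 - 2 * f ^+ m).
Proof.
elim: m => [|m IHm]; first by rewrite expr0 (egf_deriv_natr _ 1) mulr0 mul0r.
rewrite exprS egf_derivM mulrDr mulrA euler_egf_riccati.
have -> : 2 * (f * egf_deriv (f ^+ m)) = f * (2 * egf_deriv (f ^+ m)) by ring.
by rewrite IHm !exprS -natr1; ring.
Qed.

End EulerEgf.

Section EgfDiffOp.
Variable R : numFieldType.
Implicit Types (p : {poly R}) (a : egf R).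

(* p(D) A for D = d/dt *)
Definition egf_diffop p a : egf R := fun n => \sum_(i < size p) p`_i * a (n + i)%N.

Lemma egf_diffop_widen p a N n : (size p <= N)%N ->
  egf_diffop p a n = \sum_(i < N) p`_i * a (n + i)%N.
Proof.
move=> le_pN; rewrite /egf_diffop (big_ord_widen _ (fun i => p`_i * a (n + i)%N) le_pN).
rewrite big_mkcond; apply: eq_bigr => i _; case: ltnP => // le_pi.
by rewrite nth_default // mul0r.
Qed.

Lemma egf_diffop_mulXaddn p k a :
  egf_diffop (p * ('X + k%:R%:P)) a = egf_deriv (egf_diffop p a) + k%:R * egf_diffop p a.
Proof.
have size_pXk : (size (p * ('X + k%:R%:P))%R <= (size p).+1)%N.
  by rewrite (leq_trans (size_polyMleq _ _)) // size_XaddC addn2.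
apply: funext => n; rewrite (egf_diffop_widen _ _ size_pXk) egfD egf_natrM /egf_deriv.
rewrite !(egf_diffop_widen _ _ (leqnn _)) mulr_sumr.
under eq_bigr do rewrite mulrDr coefD coefMX coefMC mulrDl.
rewrite big_split /= big_ord_recl /= mul0r add0r big_ord_recr /=.
rewrite [p`_(size p)]nth_default // !mul0r addr0.
congr (_ + _); apply: eq_bigr => i _; first by rewrite /bump /= add0n add1n addnS addSn.
by rewrite mulrAC mulrC.
Qed.

Local Notation f := (euler_egf R).

Lemma euler_egf_pow_diffop m :
  2 ^+ m * egf_diffop (shifted_rising_poly R m) f = m`!%:R * f ^+ m.+1.
Proof.
elim: m => [|m IHm].
  rewrite /shifted_rising_poly big_ord0 expr0 mul1r fact0 mul1r expr1.
  by apply: funext => n; rewrite /egf_diffop size_poly1 big_ord1 coef1 mul1r addn0.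
rewrite /shifted_rising_poly big_ord_recr /= -/(shifted_rising_poly R m).
rewrite egf_diffop_mulXaddn; set A := egf_diffop _ f.
have dIHm := congr1 egf_deriv IHm.
rewrite -natrX !egf_deriv_natrM natrX in dIHm.
transitivity (2 * (2 ^+ m * egf_deriv A) + m.+1%:R * 2 * (2 ^+ m * A)).
  by rewrite exprS; ring.
rewrite dIHm IHm.
have -> : 2 * (m`!%:R * egf_deriv (f ^+ m.+1)) = m`!%:R * (2 * egf_deriv (f ^+ m.+1)).
  by ring.
by rewrite euler_egf_pow_deriv factS natrM !exprS -natr1; ring.
Qed.

Lemma euler_egf_pow_coef r n : (0 < r)%N ->
  (f ^+ r) n = 2 ^+ r.-1 / (r.-1)`!%:R *
    \sum_(j < r) (-1) ^+ j * (stirling1 r (r - j))%:~R * eulerE (n + r - j - 1).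
Proof.
move=> r_gt0.
have := congr1 (fun a : egf R => a n) (euler_egf_pow_diffop r.-1).
rewrite prednK // -natrX !egf_natrM natrX => eq_n.
have -> : (f ^+ r) n =
    2 ^+ r.-1 / (r.-1)`!%:R * egf_diffop (shifted_rising_poly R r.-1) f n.
  by rewrite mulrAC eq_n mulrC mulKf ?natr_fact_neq0.
congr (_ * _).
have size_rising : (size (shifted_rising_poly R r.-1) <= r)%N.
  by rewrite -{2}(prednK r_gt0) size_shifted_rising_poly.
rewrite (egf_diffop_widen _ _ size_rising) (reindex_inj rev_ord_inj).
apply: eq_bigr => j _ /=; have lt_jr := ltn_ord j.
rewrite -coef_shifted_rising_poly_stirling1 //; congr (_`_ _ * eulerE _); lia.
Qed.

End EgfDiffOp.

Lemma eulerPolyE (R : numFieldType) n (y : R) :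
  eulerPoly n y = (euler_egf R * egf_exp y) n.
Proof. by rewrite /eulerPoly /eulerPolyR egf_powE expr1. Qed.

Lemma eulerPolyR_egf (R : numFieldType) r n (x : R) :
  eulerPolyR r n x = (euler_egf R ^+ r * egf_exp x) n.
Proof. by rewrite /eulerPolyR egf_powE. Qed.

Lemma sum_ord_even (R : nmodType) (F : nat -> R) n :
    (forall i, odd i -> F i = 0) ->
  \sum_(i < n.+1) F i = \sum_(k < n./2.+1) F (2 * k)%N.
Proof.
move=> F_odd; elim: n => [|n IHn]; first by rewrite !big_ord1.
rewrite big_ord_recr /= IHn uphalf_half; case: (boolP (odd n)) => [odd_n|even_n] /=.
  rewrite add1n [RHS]big_ord_recr /= mul2n doubleS odd_halfK //; case: (n) odd_n => //.
by rewrite add0n F_odd ?addr0 //=.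
Qed.

Unset Implicit Arguments. Set Strict Implicit. Set Printing Implicit Defensive.

Theorem mainTheorem8 (R : numFieldType) (r n : nat) (x : R) :
  (0 < r)%N ->
  eulerPolyR r n x =
    (2 ^+ r.-1 / (r.-1)`!%:R) *
    \sum_(j < r) \sum_(k < n./2.+1)
      ((-1) ^+ j * (stirling1 r (r - j))%:~R * 'C(n, 2 * k)%:R
        * r%:R ^+ (n - 2 * k) * eulerE (2 * k + r - j - 1)
        * eulerPoly (n - 2 * k) (x / r%:R)).
Proof.
move=> r_gt0; set f := euler_egf R.
pose B : egf R := egf_scale r%:R f * egf_exp x.
have coefB m : r%:R ^+ m * eulerPoly m (x / r%:R) = B m.
  have -> : B = egf_scale r%:R (f * egf_exp (x / r%:R)).
    by rewrite rmorphM /= egf_scale_exp [r%:R * _]mulrC divfK // pnatr_eq0 -lt0n.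
  by rewrite eulerPolyE.
have -> : eulerPolyR r n x = (egf_even (f ^+ r) * B) n.
  by rewrite eulerPolyR_egf {1}(euler_egf_pow_even R r) mulrAC mulrC.
rewrite egfM /egf_mul.
rewrite (sum_ord_even (F := fun i => 'C(n, i)%:R * egf_even (f ^+ r) i * B (n - i)%N));
  last by move=> i odd_i; rewrite /egf_even odd_i mulr0 mul0r.
rewrite exchange_big mulr_sumr; apply: eq_bigr => k _ /=.
rewrite /egf_even mul2n odd_double -mul2n euler_egf_pow_coef // -coefB.
move: (eulerPoly _ _) => E; rewrite !mulr_sumr mulr_suml.
by apply: eq_bigr => j _; ring.
Qed.
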